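(* Let $0<\lambda<\frac{5-\sqrt{21}}{2}$ and let $K$ be the attractor of the IFS $f_1(x)=\lambda x$, $f_2(x)=\lambda x+2\lambda$, $f_3(x)=\lambda x+3\lambda-\lambda^2$, $f_4(x)=\lambda x+1-\lambda$. For every $k\ge1$, $f_2\circ f_4(U_{2^k})\subseteq U_{2^{k+1}}$.
   Context: A coding of $x\in K$ is a sequence $(i_n)\in\{1,2,3,4\}^{\mathbb{N}}$ with $x=\lim_{n\to\infty}f_{i_1}\circ\cdots\circ f_{i_n}(0)$. $U_k$ denotes the set of $x\in K$ having exactly $k$ distinct codings. *)

From Stdlib Require Import Reals Lra Lia List.
Open Scope R_scope.

(* The four maps of the IFS, indexed by digits 1..4 (any other index is
   irrelevant since codings only use digits in {1,2,3,4}). *)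
Definition ifs (lam : R) (i : nat) (x : R) : R :=
  match i with
  | 1%nat => lam * x
  | 2%nat => lam * x + 2 * lam
  | 3%nat => lam * x + 3 * lam - lam ^ 2
  | _ => lam * x + 1 - lam
  end.

(* comp lam c n x = f_{c 0} o f_{c 1} o ... o f_{c (n-1)} (x) *)
Fixpoint comp (lam : R) (c : nat -> nat) (n : nat) (x : R) : R :=
  match n with
  | O => x
  | S m => comp lam c m (ifs lam (c m) x)
  end.

Definition is_digit_seq (c : nat -> nat) : Prop :=
  forall n, (1 <= c n <= 4)%nat.

Definition is_coding (lam : R) (c : nat -> nat) (x : R) : Prop :=
  is_digit_seq c /\ Un_cv (fun n => comp lam c n 0) x.

(* The attractor K: the set of points having a coding. *)
Definition in_K (lam : R) (x : R) : Prop :=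
  exists c, is_coding lam c x.

Definition seq_distinct (c d : nat -> nat) : Prop := exists n, c n <> d n.

Fixpoint pairwise_distinct (l : list (nat -> nat)) : Prop :=
  match l with
  | nil => True
  | c :: l' => Forall (seq_distinct c) l' /\ pairwise_distinct l'
  end.

Definition has_exactly_codings (lam : R) (k : nat) (x : R) : Prop :=
  exists l : list (nat -> nat),
    length l = k /\ pairwise_distinct l /\
    Forall (fun c => is_coding lam c x) l /\
    (forall c, is_coding lam c x -> exists d, In d l /\ forall n, c n = d n).

Definition in_Uk (lam : R) (k : nat) (x : R) : Prop :=
  in_K lam x /\ has_exactly_codings lam k x.

(* The point y = f_2(f_4 x) lies in f_2(K) ∩ f_3(K), and y = f_3(f_1 x) as well.
   The first-level pieces f_i([0,1]) overlap only for i = 2, 3, so a coding of y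
   starts with 2 or 3; peeling that digit off leaves f_4 x or f_1 x, which lie
   only in the pieces f_4([0,1]) resp. f_1([0,1]).  Hence the codings of y are
   exactly 24d and 31d for d a coding of x, and there are twice as many of them. *)
From Pilot Require Import Defs.
From Stdlib Require Import Reals Lra Lia List.
Open Scope R_scope.

Definition shift (c : nat -> nat) : nat -> nat := fun n => c (S n).

Definition scons (a : nat) (c : nat -> nat) : nat -> nat :=
  fun n => match n with O => a | S m => c m end.

Lemma Un_cv_const (r : R) : Un_cv (fun _ => r) r.
Proof.
  intros eps Heps; exists O; intros n _.
  unfold Rdist; rewrite Rminus_diag, Rabs_R0; lra.
Qed.

Lemma Un_cv_affine (a b : R) (u : nat -> R) (l : R) :
  Un_cv u l -> Un_cv (fun n => a * u n + b) (a * l + b).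
Proof.
  intros Hu.
  apply (CV_plus (fun n => a * u n) (fun _ => b)); [|apply Un_cv_const].
  apply (CV_mult (fun _ => a) u); [apply Un_cv_const|exact Hu].
Qed.

Lemma Un_cv_S (u : nat -> R) (l : R) : Un_cv u l -> Un_cv (fun n => u (S n)) l.
Proof.
  intros Hu; apply Un_cv_ext with (fun n => u (n + 1)%nat).
  - intros n; now rewrite Nat.add_1_r.
  - now apply CV_shift'.
Qed.

Lemma Un_cv_S_inv (u : nat -> R) (l : R) : Un_cv (fun n => u (S n)) l -> Un_cv u l.
Proof.
  intros Hu; apply CV_shift with 1%nat.
  apply Un_cv_ext with (fun n => u (S n)); [|exact Hu].
  intros n; now rewrite Nat.add_1_r.
Qed.

Lemma ifs_affine (lam : R) (i : nat) (x : R) : ifs lam i x = lam * x + ifs lam i 0.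
Proof. destruct i as [|[|[|[|i]]]]; simpl; ring. Qed.

Lemma comp_S (lam : R) (c : nat -> nat) (n : nat) (x : R) :
  Defs.comp lam c (S n) x = ifs lam (c O) (Defs.comp lam (shift c) n x).
Proof.
  revert x; induction n as [|n IH]; intros x; [reflexivity|].
  exact (IH (ifs lam (c (S n)) x)).
Qed.

Lemma pairwise_distinct_app (l1 l2 : list (nat -> nat)) :
  pairwise_distinct l1 -> pairwise_distinct l2 ->
  (forall c d, In c l1 -> In d l2 -> seq_distinct c d) ->
  pairwise_distinct (l1 ++ l2).
Proof.
  induction l1 as [|c l1 IH]; simpl; auto.
  intros [Hc Hl1] Hl2 Hcross; split.
  - apply Forall_app; split; [exact Hc|].
    apply Forall_forall; intros d Hd; apply Hcross; auto.
  - apply IH; auto.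
Qed.

Lemma pairwise_distinct_map (f : (nat -> nat) -> nat -> nat) (l : list (nat -> nat)) :
  (forall c d, seq_distinct c d -> seq_distinct (f c) (f d)) ->
  pairwise_distinct l -> pairwise_distinct (map f l).
Proof.
  intros Hf; induction l as [|c l IH]; simpl; auto.
  intros [Hc Hl]; split; [|auto].
  apply Forall_map; eapply Forall_impl; [|exact Hc]; auto.
Qed.

Lemma seq_distinct_scons (a : nat) (c d : nat -> nat) :
  seq_distinct c d -> seq_distinct (scons a c) (scons a d).
Proof. intros [n Hn]; now exists (S n). Qed.

Section Codings.

Variable lam : R.

Lemma is_coding_scons (a : nat) (c : nat -> nat) (x : R) :
  (1 <= a <= 4)%nat -> is_coding lam c x -> is_coding lam (scons a c) (ifs lam a x).
Proof.
  intros Ha [Hc Hcv]; split.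
  - intros [|n]; simpl; auto.
  - apply Un_cv_S_inv.
    apply Un_cv_ext with (fun n => lam * Defs.comp lam c n 0 + ifs lam a 0).
    + intros n; rewrite comp_S; symmetry; apply ifs_affine.
    + rewrite (ifs_affine lam a x); now apply Un_cv_affine.
Qed.

Hypothesis lam_neq0 : lam <> 0.

Lemma ifs_inj (i : nat) (u v : R) : ifs lam i u = ifs lam i v -> u = v.
Proof.
  rewrite (ifs_affine lam i u), (ifs_affine lam i v); intros E.
  apply Rmult_eq_reg_l with lam; [lra|exact lam_neq0].
Qed.

Lemma is_coding_shift (c : nat -> nat) (y : R) :
  is_coding lam c y -> exists z, is_coding lam (shift c) z /\ y = ifs lam (c O) z.
Proof.
  intros [Hc Hcv].
  set (b := ifs lam (c O) 0).
  exists ((y - b) / lam); split.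
  - split; [intros n; apply Hc|].
    apply Un_cv_ext with (fun n => / lam * Defs.comp lam c (S n) 0 + - b / lam).
    + intros n; rewrite comp_S, ifs_affine; unfold b; field; exact lam_neq0.
    + replace ((y - b) / lam) with (/ lam * y + - b / lam) by (field; exact lam_neq0).
      now apply Un_cv_affine, (Un_cv_S (fun n => Defs.comp lam c n 0)).
  - rewrite ifs_affine; unfold b; field; exact lam_neq0.
Qed.

Lemma is_coding_shift_inv (c : nat -> nat) (z : R) :
  is_coding lam c (ifs lam (c O) z) -> is_coding lam (shift c) z.
Proof.
  intros Hc; destruct (is_coding_shift c _ Hc) as [z' [Hz' E]].
  now rewrite (ifs_inj _ _ _ E).
Qed.

Lemma has_exactly_codings_two_prefixes (a b a' b' k : nat) (x y : R) :
  (1 <= a <= 4)%nat -> (1 <= b <= 4)%nat -> (1 <= a' <= 4)%nat -> (1 <= b' <= 4)%nat ->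
  a <> a' -> ifs lam a (ifs lam b x) = y -> ifs lam a' (ifs lam b' x) = y ->
  (forall c, is_coding lam c y -> (c O = a /\ c 1%nat = b) \/ (c O = a' /\ c 1%nat = b')) ->
  has_exactly_codings lam k x -> has_exactly_codings lam (2 * k) y.
Proof.
  intros Ha Hb Ha' Hb' Haa' Hy Hy' Hprefix [l [Hlen [Hpd [Hcod Hcover]]]].
  exists (map (fun d => scons a (scons b d)) l ++ map (fun d => scons a' (scons b' d)) l).
  split; [|split; [|split]].
  - rewrite length_app, !length_map; lia.
  - apply pairwise_distinct_app;
      try (apply pairwise_distinct_map; auto; intros; now do 2 apply seq_distinct_scons).
    intros c d Hc Hd.
    apply in_map_iff in Hc as [c' [<- _]]; apply in_map_iff in Hd as [d' [<- _]].
    now exists O.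
  - apply Forall_app; split; apply Forall_map; eapply Forall_impl; try exact Hcod;
      intros d Hd; [rewrite <- Hy|rewrite <- Hy'];
      apply is_coding_scons; auto; apply is_coding_scons; auto.
  - intros c Hc.
    assert (Htail : is_coding lam (shift (shift c)) x).
    { apply is_coding_shift_inv, is_coding_shift_inv.
      destruct (Hprefix c Hc) as [[-> E1]|[-> E1]]; unfold shift; rewrite E1;
        congruence. }
    destruct (Hcover _ Htail) as [d [Hin Hd]].
    destruct (Hprefix c Hc) as [[E0 E1]|[E0 E1]];
      [exists (scons a (scons b d)) | exists (scons a' (scons b' d))];
      (split; [apply in_or_app; (left + right); apply in_map_iff; now exists d|]);
      intros [|[|n]]; simpl; auto; apply Hd.
Qed.

End Codings.

Section Geometry.

Variable lam : R.
Hypothesis lam_pos : 0 < lam.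
Hypothesis lam_lt_quarter : lam < 1 / 4.
Hypothesis f3_below_f4 : 4 * lam - lam ^ 2 < 1 - lam.

Lemma ifs_unit_interval (i : nat) (x : R) :
  (1 <= i <= 4)%nat -> 0 <= x <= 1 -> 0 <= ifs lam i x <= 1.
Proof. intros Hi Hx; destruct i as [|[|[|[|[|i]]]]]; try lia; simpl; nra. Qed.

Lemma comp_unit_interval (c : nat -> nat) (n : nat) (x : R) :
  is_digit_seq c -> 0 <= x <= 1 -> 0 <= Defs.comp lam c n x <= 1.
Proof.
  intros Hc; revert x; induction n as [|n IH]; intros x Hx; simpl; auto.
  apply IH, ifs_unit_interval; auto.
Qed.

Lemma is_coding_unit_interval (c : nat -> nat) (y : R) :
  is_coding lam c y -> 0 <= y <= 1.
Proof.
  intros [Hc Hcv]; split.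
  - apply (Rle_cv_lim (Un := fun _ => 0) (Vn := fun n => Defs.comp lam c n 0)); auto using Un_cv_const.
    intros n; apply comp_unit_interval; auto; lra.
  - apply (Rle_cv_lim (Un := fun n => Defs.comp lam c n 0) (Vn := fun _ => 1)); auto using Un_cv_const.
    intros n; apply comp_unit_interval; auto; lra.
Qed.

(* f_i([0,1]) = [f_i 0, f_i 0 + lam]; these are [0,lam], [2lam,3lam],
   [3lam-lam^2,4lam-lam^2], [1-lam,1], and only the middle two meet. *)
Lemma ifs_overlap (i j : nat) (u v : R) :
  (1 <= i <= 4)%nat -> (1 <= j <= 4)%nat -> 0 <= u <= 1 -> 0 <= v <= 1 ->
  ifs lam i u = ifs lam j v -> i = j \/ (i = 2 /\ j = 3)%nat \/ (i = 3 /\ j = 2)%nat.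
Proof.
  intros Hi Hj Hu Hv E.
  destruct i as [|[|[|[|[|i]]]]]; try lia; destruct j as [|[|[|[|[|j]]]]]; try lia;
    auto; exfalso; simpl in E; nra.
Qed.

Lemma is_coding_f24_prefixes (c : nat -> nat) (x : R) :
  0 <= x <= 1 -> is_coding lam c (ifs lam 2 (ifs lam 4 x)) ->
  (c O = 2 /\ c 1%nat = 4)%nat \/ (c O = 3 /\ c 1%nat = 1)%nat.
Proof.
  intros Hx Hc.
  assert (lam_neq0 : lam <> 0) by lra.
  destruct (is_coding_shift lam lam_neq0 _ _ Hc) as [z [Hz Ez]].
  destruct (is_coding_shift lam lam_neq0 _ _ Hz) as [w [Hw Ew]].
  unfold shift in Ew.
  pose proof (proj1 Hc O) as Hc0; pose proof (proj1 Hc 1%nat) as Hc1.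
  pose proof (is_coding_unit_interval _ _ Hz) as Hz01.
  pose proof (is_coding_unit_interval _ _ Hw) as Hw01.
  assert (H4x : 0 <= ifs lam 4 x <= 1) by (apply ifs_unit_interval; auto; lia).
  assert (E31 : ifs lam 2 (ifs lam 4 x) = ifs lam 3 (ifs lam 1 x)) by (simpl; ring).
  destruct (ifs_overlap (c O) 2 z (ifs lam 4 x) Hc0 ltac:(lia) Hz01 H4x (eq_sym Ez))
    as [E0|[[_ E]|[E0 _]]]; [left|discriminate|right]; rewrite E0 in Ez; split; auto.
  - apply ifs_inj in Ez; [|exact lam_neq0]; rewrite <- Ez in Ew.
    destruct (ifs_overlap (c 1%nat) 4 w x Hc1 ltac:(lia) Hw01 Hx (eq_sym Ew))
      as [|[[_ E]|[_ E]]]; [auto|discriminate|discriminate].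
  - rewrite E31 in Ez; apply ifs_inj in Ez; [|exact lam_neq0]; rewrite <- Ez in Ew.
    destruct (ifs_overlap (c 1%nat) 1 w x Hc1 ltac:(lia) Hw01 Hx (eq_sym Ew))
      as [|[[_ E]|[_ E]]]; [auto|discriminate|discriminate].
Qed.

End Geometry.

Lemma lam_bounds (lam : R) :
  0 < lam < (5 - sqrt 21) / 2 -> lam < 1 / 4 /\ 4 * lam - lam ^ 2 < 1 - lam.
Proof.
  intros [Hpos Hlt].
  assert (Hsq : sqrt 21 * sqrt 21 = 21) by (apply sqrt_sqrt; lra).
  pose proof (sqrt_pos 21).
  assert (sqrt 21 > 4.5) by nra.
  split; [lra|nra].
Qed.

Theorem lemma2p29 (lam : R) (Hlam : 0 < lam < (5 - sqrt 21) / 2) (k : nat)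
  (Hk : (1 <= k)%nat) (x : R) :
  in_Uk lam (2 ^ k) x -> in_Uk lam (2 ^ (S k)) (ifs lam 2 (ifs lam 4 x)).
Proof.
  destruct (lam_bounds lam Hlam) as [Hquarter Hgap].
  assert (lam_pos : 0 < lam) by apply Hlam.
  intros [[c Hc] Hcount].
  assert (Hx01 : 0 <= x <= 1) by exact (is_coding_unit_interval lam lam_pos Hquarter _ _ Hc).
  split.
  - exists (scons 2 (scons 4 c)); now do 2 (apply is_coding_scons; [lia|]).
  - apply (has_exactly_codings_two_prefixes lam ltac:(lra) 2 4 3 1 _ x); auto; try lia.
    + simpl; ring.
    + intros d Hd; now apply (is_coding_f24_prefixes lam lam_pos Hquarter Hgap d x).
Qed.
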